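(* Every $F_2$-free split graph is hereditarily connected-domishold.
   Context: A graph is split if its vertex set can be partitioned into a clique and an independent set. $F_2$ is the graph obtained from $K_4$ on $\{a,b,c,d\}$ by adding a new vertex adjacent exactly to $a$ and $b$ and another new vertex adjacent exactly to $c$ and $d$. A connected dominating set of a connected graph $G$ is a set $S\subseteq V(G)$ such that every vertex outside $S$ has a neighbor in $S$ and $G[S]$ is connected; $G$ is connected-domishold if there exist $w:V(G)\to\mathbb{R}_{\ge0}$, $t\in\mathbb{R}_{\ge0}$ with $\sum_{x\in S}w(x)\ge t$ iff $S$ is a connected dominating set, for all $S$; disconnected graphs are connected-domishold by convention. $G$ is hereditarily connected-domishold if every induced subgraph is connected-domishold. *)

From mathcomp Require Import all_boot.
From Stdlib Require Import Reals.
Set Implicit Arguments. Unset Strict Implicit. Unset Printing Implicit Defensive.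

(* A finite simple graph: vertex type T : finType, adjacency e : rel T,
   assumed symmetric and irreflexive (hypotheses in the theorem). *)

Section Graphs.
Variable T : finType.
Variable e : rel T.

Definition is_clique (K : {set T}) : Prop :=
  forall x y, x \in K -> y \in K -> x != y -> e x y.
Definition is_independent (I : {set T}) : Prop :=
  forall x y, x \in I -> y \in I -> ~~ e x y.
Definition split_graph : Prop :=
  exists K I : {set T}, [/\ K :|: I = setT, K :&: I = set0,
                            is_clique K & is_independent I].

(* adjacency of F_2: K_4 on {0,1,2,3}, vertex 4 adjacent exactly to 0,1,
   vertex 5 adjacent exactly to 2,3. *)
Definition F2_edge (i j : 'I_6) : bool :=
  let a := nat_of_ord i in let b := nat_of_ord j in
  [|| (a != b) && (a < 4) && (b < 4)
    , (a == 4) && (b < 2), (b == 4) && (a < 2)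
    , (a == 5) && (2 <= b < 4) | (b == 5) && (2 <= a < 4)].

Definition F2_free : Prop :=
  ~ exists f : 'I_6 -> T, injective f /\ forall i j, e (f i) (f j) = F2_edge i j.

(* the induced subgraph G[S] is connected (vacuous for S empty) *)
Definition connected_in (S : {set T}) : Prop :=
  forall x y, x \in S -> y \in S ->
    connect [rel u v | [&& e u v, u \in S & v \in S]] x y.

Definition cds_in (A S : {set T}) : Prop :=
  [/\ S \subset A,
      (forall v, v \in A -> v \notin S -> exists2 u, u \in S & e v u)
    & connected_in S].

(* G[A] is connected-domishold (disconnected graphs are by convention) *)
Definition connected_domishold_in (A : {set T}) : Prop :=
  ~ connected_in A \/
  exists (w : T -> R) (t : R),
    (forall x, (0 <= w x)%R) /\ (0 <= t)%R /\
    forall S : {set T}, S \subset A ->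
      ((t <= \big[Rplus/0%R]_(x in S) w x)%R <-> cds_in A S).

Definition hereditarily_connected_domishold : Prop :=
  forall A : {set T}, connected_domishold_in A.

End Graphs.

From mathcomp Require Import all_boot zify.
From Stdlib Require Import Reals.
Set Implicit Arguments. Unset Strict Implicit. Unset Printing Implicit Defensive.

(* Inside an induced subgraph G[A] of a split graph, take the partition A = K + I
   and move into K the (at most one, I being independent) vertex of I adjacent to
   all of K.  Then S is a connected dominating set of G[A] iff S is a transversal
   of the hypergraph with edges K and N(x) :&: K for x in I.  Two such edges N, M
   with |N \ M| >= 2 and |M \ N| >= 2 span an induced F_2, so for F_2-free graphs
   the hypergraph is 1-Sperner, and 1-Sperner hypergraphs are threshold
   (Boros, Gurvich, Milanic): the minimal edges have a vertex z with P \ z <= Q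
   whenever z \in P and z \notin Q, which splits "X is a transversal" into two
   threshold conditions on fewer vertices whose weights can be combined. *)

Section Hypergraphs.
Variable T : finType.
Implicit Types (D N M P Q U V W X : {set T}) (F G : {set {set T}}).

Definition hits F X := [forall N in F, X :&: N != set0].

(* 1-Sperner in the sense of Boros, Gurvich and Milanic, except that F need not
   be an antichain. *)
Definition one_sperner F :=
  forall N M, N \in F -> M \in F -> #|N :\: M| <= 1 \/ #|M :\: N| <= 1.

Definition antichain F := forall P Q, P \in F -> Q \in F -> P \subset Q -> P = Q.

Definition threshold_on V F := exists (w : T -> nat) (t : nat),
  (forall x, x \notin V -> w x = 0) /\ forall X, hits F X = (t <= \sum_(x in X) w x).

Lemma hitsP F X : reflect (forall N, N \in F -> X :&: N != set0) (hits F X).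
Proof. exact: forall_inP. Qed.

Lemma setI_neq0P X N : reflect (exists2 x, x \in X & x \in N) (X :&: N != set0).
Proof.
apply: (iffP (set0Pn _)) => [[x /setIP[]]|[x xX xN]]; first by exists x.
by exists x; rewrite inE xX xN.
Qed.

Definition minimal_members F := [set N | minset [pred P | P \in F] N].

Lemma minimal_members_sub F : minimal_members F \subset F.
Proof. by apply/subsetP=> N; rewrite inE => /minsetp. Qed.

Lemma minimal_members_antichain F : antichain (minimal_members F).
Proof.
move=> P Q; rewrite !inE => minP minQ PQ; apply: (minsetinf minQ) => //.
exact: minsetp minP.
Qed.

Lemma minimal_members_exists F N :
  N \in F -> exists2 M, M \in minimal_members F & M \subset N.
Proof.
move=> NF; have [M minM MN] := minset_exists (P := [pred P | P \in F]) NF.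
by exists M; rewrite ?inE.
Qed.

Lemma hits_minimal_members F X : hits (minimal_members F) X = hits F X.
Proof.
apply/hitsP/hitsP=> hitX N NF; last exact/hitX/(subsetP (minimal_members_sub F)).
have [M MF MN] := minimal_members_exists NF; have /setI_neq0P[x xX xM] := hitX M MF.
by apply/setI_neq0P; exists x => //; apply: (subsetP MN).
Qed.

Lemma one_spernerS F G : G \subset F -> one_sperner F -> one_sperner G.
Proof. by move=> GF spF N M NG MG; apply: spF; apply: (subsetP GF). Qed.

Lemma one_sperner_setD_imset F G D :
  G \subset F -> one_sperner F -> one_sperner [set P :\: D | P in G].
Proof.
move=> GF spF _ _ /imsetP[P PG ->] /imsetP[Q QG ->].
have le R S : #|(R :\: D) :\: (S :\: D)| <= #|R :\: S|.
  by apply/subset_leq_card/subsetP=> x; rewrite !inE; case: (x \in D); rewrite ?andbF.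
by case: (one_spernerS GF spF PG QG) => h; [left|right]; apply: leq_trans (le _ _) h.
Qed.

Lemma antichain_setD_neq0 F P Q :
  antichain F -> P \in F -> Q \in F -> P != Q -> P :\: Q != set0.
Proof. by move=> acF PF QF; apply: contraNneq => /eqP; rewrite setD_eq0 => /acF ->. Qed.

Lemma antichain_one_sperner_setD1 F P Q : antichain F -> one_sperner F ->
  P \in F -> Q \in F -> 1 < #|P :\: Q| -> exists q, Q :\: P = [set q].
Proof.
move=> acF spF PF QF gt1; apply/cards1P; rewrite eqn_leq.
have QP : Q != P by apply: contraTneq gt1 => ->; rewrite setDv cards0.
rewrite card_gt0 (antichain_setD_neq0 acF QF PF QP) andbT.
by case: (spF P Q PF QF) => // le1; move: gt1; rewrite ltnNge le1.
Qed.

Definition pivot F z :=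
  forall P Q, P \in F -> Q \in F -> z \in P -> z \notin Q -> P :\ z \subset Q.

Section ExtremalPair.
Variables (F : {set {set T}}) (N M : {set T}) (z : T).
Hypotheses (acF : antichain F) (spF : one_sperner F) (NF : N \in F) (MF : M \in F).
Hypothesis NMz : N :\: M = [set z].
Hypothesis maxNM : forall P Q, P \in F -> Q \in F -> #|P :\: Q| = 1 ->
  #|Q :\: P| <= #|M :\: N|.

Let zNM : z \in N :\: M. Proof. by rewrite NMz set11. Qed.
Let zN : z \in N. Proof. by case/setDP: zNM. Qed.
Let zM : z \notin M. Proof. by case/setDP: zNM. Qed.

Let NsubM x : x \in N -> x != z -> x \in M.
Proof. by move=> xN; apply: contraNT => xM; rewrite -in_set1 -NMz inE xM. Qed.

(* Replacing the pair by (Q, M) or (P, N) would beat the maximality of |M \ N|. *)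
Let too_large P Q x : P \in F -> Q \in F -> #|P :\: Q| = 1 ->
  x \in Q :\: P -> x \notin M :\: N -> x |: (M :\: N) \subset Q :\: P -> false.
Proof.
move=> PF QF PQ1 _ xMN sub; have := maxNM PF QF PQ1.
by rewrite leqNgt (leq_trans _ (subset_leq_card sub)) // cardsU1 xMN.
Qed.

Lemma extremal_pair_avoid Q : Q \in F -> z \notin Q -> N :\ z \subset Q.
Proof.
move=> QF zQ; apply/subsetP=> c /setD1P[cz cN]; apply: contraT => cQ.
have [q Qq] : exists q, Q :\: N = [set q].
  apply: antichain_one_sperner_setD1 (acF) (spF) NF QF _.
  by apply/card_gt1P; exists z, c; rewrite !inE zN zQ cN cQ eq_sym cz.
have QMq : Q :\: M \subset [set q].
  apply/subsetP=> y /setDP[yQ yM]; rewrite -Qq inE yQ andbT.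
  by apply: contra yM => yN; apply: NsubM yN _; apply: contraNneq zQ => <-.
have QM : Q != M by apply: contraNneq cQ => ->; exact: NsubM.
have QM1 : #|Q :\: M| = 1.
  apply/eqP; rewrite eqn_leq card_gt0 (antichain_setD_neq0 acF QF MF QM) andbT.
  by rewrite -(cards1 q) subset_leq_card.
have qM : q \notin M.
  have [y yQM] := set0Pn _ (antichain_setD_neq0 acF QF MF QM).
  by have /set1P yq := subsetP QMq y yQM; move: yQM; rewrite yq => /setDP[].
apply: (too_large QF MF QM1 (x := c)); first by rewrite inE NsubM // cQ.
  by rewrite inE cN.
apply/subsetP=> y /setU1P[->|/setDP[yM yN]]; first by rewrite inE cQ NsubM.
rewrite inE yM andbT; apply: contraNN qM => yQ.
by have /set1P <- : y \in [set q] by rewrite -Qq inE yQ yN.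
Qed.

Lemma extremal_pair_contain P : P \in F -> z \in P -> P :\ z \subset M.
Proof.
move=> PF zP; apply/subsetP=> x /setD1P[xz xP]; apply: contraT => xM.
have [p Pp] : exists p, M :\: P = [set p].
  apply: antichain_one_sperner_setD1 (acF) (spF) PF MF _.
  by apply/card_gt1P; exists z, x; rewrite !inE zP zM xP xM eq_sym xz.
have pMP : p \in M :\: P by rewrite Pp set11.
have [pN|pN] := boolP (p \in N); last first.
  have NP : N \subset P.
    apply/subsetP=> y yN; have [->//|yz] := eqVneq y z; apply: contraT => yP.
    have /set1P yp : y \in [set p] by rewrite -Pp inE yP NsubM.
    by move: pN; rewrite -yp yN.
  have NeP := acF NF PF NP; subst P.
  by move: xM; rewrite NsubM.
have NP1 : #|N :\: P| = 1.
  apply/eqP/cards1P; exists p; apply/setP=> y; rewrite !inE.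
  apply/andP/eqP => [[yP yN]|->]; last by case/setDP: pMP.
  by apply/set1P; rewrite -Pp inE yP NsubM //; apply: contraNneq yP => ->.
have xN : x \notin N by apply: contraNN xM => xN; exact: NsubM xN xz.
apply: (too_large NF PF NP1 (x := x)); first by rewrite inE xP xN.
  by rewrite inE (negbTE xM) andbF.
apply/subsetP=> y /setU1P[->|/setDP[yM yN]]; first by rewrite inE xP xN.
rewrite inE yN /=; apply: contraT => yP.
have /set1P yp : y \in [set p] by rewrite -Pp inE yP yM.
by rewrite yp pN in yN.
Qed.

Lemma extremal_pair_pivot : pivot F z.
Proof.
move=> P Q PF QF zP zQ; apply/subsetP=> x /setD1P[xz xP]; apply: contraT => xQ.
have PQ : 1 < #|P :\: Q| by apply/card_gt1P; exists z, x; rewrite !inE zP zQ xP xQ eq_sym xz.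
have [y Qy] := antichain_one_sperner_setD1 acF spF PF QF PQ.
have PzM := extremal_pair_contain PF zP.
have NzQ := extremal_pair_avoid QF zQ.
have [NP|NP] := eqVneq N P; first by move: xQ; rewrite (subsetP NzQ) // NP !inE xz.
have [n /setDP[nN nP]] := set0Pn _ (antichain_setD_neq0 acF NF PF NP).
have nz : n != z by apply: contraNneq nP => ->.
have nQP : n \in Q :\: P by rewrite inE nP (subsetP NzQ) // !inE nz.
have QM : Q \subset M.
  apply/subsetP=> q qQ; have [qP|qP] := boolP (q \in P).
    by apply: (subsetP PzM); rewrite !inE qP andbT; apply: contraNneq zQ => <-.
  have : q \in Q :\: P by rewrite inE qQ qP.
  by rewrite Qy inE => /eqP ->; move: nQP; rewrite Qy inE => /eqP <-; exact: NsubM.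
by move: xQ; rewrite (acF QF MF QM) (subsetP PzM) // !inE xz.
Qed.

End ExtremalPair.

Lemma one_sperner_pivot F N0 : antichain F -> one_sperner F ->
  N0 \in F -> N0 != set0 -> exists z N, [/\ N \in F, z \in N & pivot F z].
Proof.
move=> acF spF N0F N0ne.
pose diff1 (p : {set T} * {set T}) := [&& p.1 \in F, p.2 \in F & #|p.1 :\: p.2| == 1].
have [p0 p0F|no_diff1] := pickP diff1; last first.
  have [z zN0] := set0Pn _ N0ne; exists z, N0; split=> // P Q PF QF zP zQ.
  have PQ : P != Q by apply: contraTneq zP => ->.
  have /negP[] := no_diff1 (if #|P :\: Q| <= 1 then (P, Q) else (Q, P)).
  rewrite /diff1; case: ifP => le1 /=; rewrite PF QF eqn_leq ?le1 ?card_gt0.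
    exact: antichain_setD_neq0 acF PF QF PQ.
  case: (spF P Q PF QF) => [|->]; first by rewrite le1.
  by rewrite (antichain_setD_neq0 acF QF PF) // eq_sym.
case: (arg_maxnP (fun p => #|p.2 :\: p.1|) p0F) => -[N M] /and3P[/= NF MF].
case/cards1P=> z NMz maxNM; exists z, N; split=> //.
  by have /setDP[] : z \in N :\: M by rewrite NMz set11.
apply: extremal_pair_pivot acF spF NF MF NMz _ => P Q PF QF PQ1.
by apply: (maxNM (P, Q)); rewrite /diff1 /= PF QF PQ1.
Qed.

Definition link G z := [set P :\ z | P in G & z \in P].
Definition pivot_rest G z := [set Q :\: cover (link G z) | Q in G & z \notin Q].

Section PivotHits.
Variables (G : {set {set T}}) (z : T) (N0 : {set T}).
Hypotheses (pivotG : pivot G z) (N0G : N0 \in G) (zN0 : z \in N0).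

Lemma hits_pivot_notin X : z \notin X -> hits G X = hits (link G z) X.
Proof.
move=> zX; apply/hitsP/hitsP=> hitX.
  move=> _ /imsetP[P /setIdP[PG zP] ->]; have /setI_neq0P[x xX xP] := hitX P PG.
  by apply/setI_neq0P; exists x; rewrite // !inE xP andbT; apply: contraNneq zX => <-.
move=> P PG; have [zP|zP] := boolP (z \in P).
  have /setI_neq0P[x xX /setD1P[_ xP]] : X :&: (P :\ z) != set0.
    by apply/hitX/imset_f; rewrite inE PG zP.
  by apply/setI_neq0P; exists x.
have /setI_neq0P[x xX xN0] : X :&: (N0 :\ z) != set0.
  by apply/hitX/imset_f; rewrite inE N0G zN0.
by apply/setI_neq0P; exists x; rewrite // (subsetP (pivotG N0G PG zN0 zP)).
Qed.

Lemma hits_pivot_in X : z \in X ->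
  hits G X = (X :&: cover (link G z) != set0) || hits (pivot_rest G z) X.
Proof.
move=> zX; apply/hitsP/idP=> [hitX|].
  have [//|XU /=] := boolP (X :&: cover (link G z) != set0).
  apply/hitsP=> _ /imsetP[Q /setIdP[QG zQ] ->]; have /setI_neq0P[x xX xQ] := hitX Q QG.
  apply/setI_neq0P; exists x; rewrite // inE xQ andbT.
  by apply: contraNN XU => xU; apply/setI_neq0P; exists x.
move=> hitX P PG; have [zP|zP] := boolP (z \in P); first by apply/setI_neq0P; exists z.
case/orP: hitX => [/setI_neq0P[u uX /bigcupP[_ /imsetP[P' /setIdP[P'G zP'] ->] uP']]|].
  by apply/setI_neq0P; exists u; rewrite // (subsetP (pivotG P'G PG zP' zP)).
move/hitsP=> hitX; have /setI_neq0P[x xX /setDP[xP _]] : X :&: (P :\: cover (link G z)) != set0.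
  by apply/hitX/imset_f; rewrite inE PG zP.
by apply/setI_neq0P; exists x.
Qed.

End PivotHits.

Lemma sum_pred1_mul X z c : \sum_(x in X) ((x == z) * c) = (z \in X) * c.
Proof.
have [zX|zX] := boolP (z \in X); last first.
  by rewrite big1 // => x xX; case: eqP => // xz; rewrite -xz xX in zX.
rewrite (bigD1 z) //= eqxx mul1n big1 ?addn0 // => x /andP[_ /negbTE->].
by rewrite mul0n.
Qed.

Lemma sum_mem_mul X U c : \sum_(x in X) ((x \in U) * c) = #|X :&: U| * c.
Proof.
rewrite -big_distrl /=; congr (_ * _).
rewrite -sum1_card big_mkcond [RHS]big_mkcond /=.
by apply: eq_bigr=> x _; rewrite inE; case: (x \in X); case: (x \in U).
Qed.

Lemma leq_sum_in X (f : T -> nat) : \sum_(x in X) f x <= \sum_x f x.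
Proof. by rewrite big_mkcond; apply: leq_sum => x _; case: (x \in X). Qed.

(* z weighs t - tB and each vertex of U weighs tB, so when z \in X one vertex
   of U, or wB reaching tB, completes the threshold; when z \notin X only the
   scaled weights c * wA can reach t = c * tA, as c exceeds all other terms. *)
Lemma threshold_pivot_combine U z (wA wB : T -> nat) tA tB :
  0 < tA -> (forall x, x \notin U -> wA x = 0) ->
  exists (w : T -> nat) (t : nat),
    (forall x, x != z -> x \notin U -> wB x = 0 -> w x = 0) /\
    forall X, (t <= \sum_(x in X) w x) =
      if z \in X then (X :&: U != set0) || (tB <= \sum_(x in X) wB x)
      else tA <= \sum_(x in X) wA x.
Proof.
move=> tA_gt0 wA0; set c := tB * #|U| + \sum_x wB x + tB + 1.
exists (fun x => (x == z) * (c * tA - tB) + c * wA x + (x \in U) * tB + wB x), (c * tA).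
split=> [x xz xU wBx|X]; first by rewrite (negbTE xz) (negbTE xU) wA0 // wBx muln0.
rewrite !big_split /= sum_pred1_mul -big_distrr /= sum_mem_mul.
set SA := \sum_(x in X) wA x; set SB := \sum_(x in X) wB x; set n := #|X :&: U|.
have nU : n * tB <= #|U| * tB by rewrite leq_mul2r subset_leq_card ?subsetIr ?orbT.
have SB_le : SB <= \sum_x wB x by apply: leq_sum_in.
have tB_lt : tB < c * tA by rewrite (@leq_trans c) ?leq_pmulr // /c; lia.
have [zX|zX] := boolP (z \in X); rewrite /= ?mul1n ?mul0n ?add0n.
  have [XU|XU] := eqVneq (X :&: U) set0; rewrite /=.
    have SA0 : SA = 0.
      rewrite /SA big1 // => x xX; apply/wA0/negP => xU.
      by move: (in_set0 x); rewrite -XU inE xX xU.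
    by rewrite SA0 /n XU cards0; apply/idP/idP; lia.
  have : tB <= n * tB by rewrite leq_pmull // /n card_gt0.
  by move=> nB; lia.
have [le_tA|lt_tA] := leqP tA SA.
  have : c * tA <= c * SA by rewrite leq_mul2l le_tA orbT.
  by move=> cSA; lia.
apply/negbTE; rewrite -ltnNge.
have : c * SA.+1 <= c * tA by rewrite leq_mul2l lt_tA orbT.
rewrite mulnS /c => cSA; rewrite /c in nU; lia.
Qed.

Lemma threshold_on_set0 V : threshold_on V set0.
Proof. by exists (fun=> 0), 0; split=> // X; apply/hitsP=> N; rewrite inE. Qed.

Lemma threshold_on_mem_set0 V F : set0 \in F -> threshold_on V F.
Proof.
move=> F0; exists (fun=> 0), 1; split=> // X; rewrite big1 //.
by apply/hitsP=> /(_ _ F0); rewrite setI0 eqxx.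
Qed.

Lemma threshold_on_minimal_members V F :
  threshold_on V (minimal_members F) -> threshold_on V F.
Proof. by case=> w [t [w0 wt]]; exists w, t; split=> // X; rewrite -hits_minimal_members. Qed.

Lemma threshold_on_pivot V W G z N0 :
  pivot G z -> N0 \in G -> z \in N0 -> z \in V ->
  cover (link G z) \subset V -> W \subset V ->
  threshold_on (cover (link G z)) (link G z) -> threshold_on W (pivot_rest G z) ->
  threshold_on V G.
Proof.
move=> pivotG N0G zN0 zV UV WV [wA [tA [wA0 hitA]]] [wB [tB [wB0 hitB]]].
have tA_gt0 : 0 < tA.
  have N0z : N0 :\ z \in link G z by apply/imset_f; rewrite inE N0G zN0.
  rewrite lt0n; apply/eqP => tA0.
  have /hitsP/(_ _ N0z) : hits (link G z) set0 by rewrite hitA big_set0 tA0.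
  by rewrite set0I eqxx.
have [w [t [w0 wt]]] := threshold_pivot_combine z wB tB tA_gt0 wA0.
exists w, t; split=> [x xV|X].
  apply: w0; first by apply: contraNneq xV => ->.
    by apply: contraNN xV => /(subsetP UV).
  by apply: wB0; apply: contraNN xV => /(subsetP WV).
rewrite wt; case: ifP => zX.
  by rewrite (hits_pivot_in pivotG zX) hitB.
by rewrite (hits_pivot_notin pivotG N0G zN0 (negbT zX)) hitA.
Qed.

Theorem one_sperner_threshold V F :
  (forall N, N \in F -> N \subset V) -> one_sperner F -> threshold_on V F.
Proof.
have [n] := ubnP #|V|; elim: n => // n IH in V F *; rewrite ltnS => leVn subV spF.
have [->|/set0Pn[N1 N1F]] := eqVneq F set0; first exact: threshold_on_set0.
have [/threshold_on_mem_set0 //|F0] := boolP (set0 \in F).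
apply: threshold_on_minimal_members; set G := minimal_members F.
have GF : G \subset F := minimal_members_sub F.
have spG := one_spernerS GF spF.
have [N0 N0G _] := minimal_members_exists N1F.
have N0ne : N0 != set0 by apply: contraNneq F0 => <-; apply: (subsetP GF).
have [z [N [NG zN pivotG]]] :=
  one_sperner_pivot (minimal_members_antichain (F:=F)) spG N0G N0ne.
set U := cover (link G z).
have zV : z \in V := subsetP (subV N (subsetP GF _ NG)) _ zN.
have UVz : U \subset V :\ z.
  apply/bigcupsP=> _ /imsetP[P /setIdP[PG _] ->].
  exact/setSD/subV/(subsetP GF).
have ltV (Y : {set T}) : Y \subset V :\ z -> #|Y| < n.
  by move=> YV; have := subset_leq_card YV; rewrite (cardsD1 z V) zV in leVn; lia.
apply: (threshold_on_pivot (W := (V :\: U) :\ z) pivotG NG zN zV).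
- exact: subset_trans UVz (subD1set V z).
- by apply/subsetP=> x /setD1P[_ /setDP[]].
- apply: IH (ltV _ UVz) _ (one_sperner_setD_imset _ spG) => [P PU|].
    exact: bigcup_sup.
  by apply/subsetP=> P /setIdP[].
- apply: IH (ltV _ (setSD _ (subsetDl V U))) _ (one_sperner_setD_imset _ spG).
    move=> _ /imsetP[Q /setIdP[QG zQ] ->]; apply/subsetP=> x /setDP[xQ xU].
    rewrite !inE xU (subsetP (subV Q (subsetP GF _ QG)) _ xQ) !andbT.
    by apply: contraNneq zQ => <-.
  by apply/subsetP=> Q /setIdP[].
Qed.

End Hypergraphs.

Lemma F2_edge_sym : symmetric F2_edge.
Proof. by move=> [[|[|[|[|[|[|?]]]]]] ?] [[|[|[|[|[|[|?]]]]]] ?]. Qed.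

(* The vertices 0, 4 and 5 of F_2 already tell apart any two non-adjacent
   vertices. *)
Lemma F2_edge_twin (i j : 'I_6) :
  (forall k, F2_edge i k = F2_edge j k) -> ~~ F2_edge i j -> i = j.
Proof.
move=> twin; move: (twin (@Ordinal 6 0 isT)) (twin (@Ordinal 6 4 isT)).
move: (twin (@Ordinal 6 5 isT)); clear twin.
by case: i j => [[|[|[|[|[|[|?]]]]]] ?] [[|[|[|[|[|[|?]]]]]] ?] //= *; apply: val_inj.
Qed.

Section SplitGraphs.
Variables (T : finType) (e : rel T).
Hypotheses (e_sym : symmetric e) (e_irr : irreflexive e).
Implicit Types (A K I S X : {set T}).

Lemma F2_pattern_injective (f : 'I_6 -> T) :
  (forall i j, e (f i) (f j) = F2_edge i j) -> injective f.
Proof.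
move=> fE i j fij; apply: F2_edge_twin => [k|]; first by rewrite -!fE fij.
by rewrite -fE fij e_irr.
Qed.

Lemma connected_in_neighbour S x u : connected_in e S -> x \in S -> u \in S -> x != u ->
  exists2 v, v \in S & e x v.
Proof.
move=> connS xS uS; have /connectP[[|v p] /= path_xu ->] := connS x u xS uS.
  by rewrite eqxx.
by case/andP: path_xu => /and3P[xv _ vS] _; exists v.
Qed.

Lemma connected_domishold_in_set0 : connected_domishold_in e set0.
Proof.
right; exists (fun=> 0%R), 0%R; split=> [_|]; first exact: Rle_refl.
split; first exact: Rle_refl.
move=> S; rewrite subset0 => /eqP->; rewrite big_set0; split=> _; last exact: Rle_refl.
by split=> [|v|x y]; rewrite ?inE ?sub0set.
Qed.

Lemma sum_INR X (w : T -> nat) :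
  \big[Rplus/0%R]_(x in X) INR (w x) = INR (\sum_(x in X) w x).
Proof. by rewrite (big_morph INR plus_INR (erefl (INR 0))). Qed.

Definition neighbours_in K x := [set k in K | e x k].
Definition cds_hypergraph K I := K |: [set neighbours_in K x | x in I].

Lemma cds_hypergraph_sub K I N : N \in cds_hypergraph K I -> N \subset K.
Proof. by case/setU1P=> [->//|/imsetP[x _ ->]]; apply/subsetP=> k /setIdP[]. Qed.

Section Partition.
Variables (A K I : {set T}).
Hypotheses (KIA : K :|: I = A) (KI0 : K :&: I = set0).
Hypotheses (cliqueK : is_clique e K) (indepI : is_independent e I).
Hypothesis undominated : forall x, x \in I -> exists2 k, k \in K & ~~ e x k.

Let memA x : (x \in A) = (x \in K) || (x \in I).
Proof. by rewrite -KIA inE. Qed.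

Let clique_notin_indep x : x \in K -> x \notin I.
Proof. by move=> xK; apply/negP => xI; move: (in_set0 x); rewrite -KI0 inE xK xI. Qed.

Let indep_of_notin_clique S x : S \subset A -> x \in S -> x \notin K -> x \in I.
Proof. by move=> SA /(subsetP SA); rewrite memA => /orP[->|]. Qed.

Lemma cds_meets_clique S : A != set0 -> S \subset A -> cds_in e A S -> S :&: K != set0.
Proof.
move=> A0 SA [_ dom connS]; apply/negP => /eqP SK.
have SI s : s \in S -> s \in I.
  move=> sS; apply: (indep_of_notin_clique SA sS).
  by apply/negP => sK; move: (in_set0 s); rewrite -SK inE sS sK.
have [a aA] := set0Pn _ A0.
have [S0|/set0Pn[x xS]] := eqVneq S set0.
  have aS : a \notin S by rewrite S0 inE.
  by have [u] := dom a aA aS; rewrite S0 inE.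
have [k kK xk] := undominated (SI x xS).
have kS : k \notin S by apply/negP => /SI; apply/negP; exact: clique_notin_indep.
have kA : k \in A by rewrite memA kK.
have [u uS ku] := dom k kA kS.
have xu : x != u by apply: contraNneq xk => ->; rewrite e_sym.
have [v vS xv] := connected_in_neighbour connS xS uS xu.
by move: (indepI (SI x xS) (SI v vS)); rewrite xv.
Qed.

Lemma cds_hits S : A != set0 -> S \subset A -> cds_in e A S -> hits (cds_hypergraph K I) S.
Proof.
move=> A0 SA cdsS; have SK := cds_meets_clique A0 SA cdsS; case: cdsS => _ dom connS.
apply/hitsP=> _ /setU1P[->//|/imsetP[x xI ->]].
have meetN u : u \in S -> e x u -> S :&: neighbours_in K x != set0.
  move=> uS xu; apply/setI_neq0P; exists u; rewrite // inE xu andbT.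
  by apply: contraTT xu => uK; exact: indepI xI (indep_of_notin_clique SA uS uK).
have [xS|xS] := boolP (x \in S).
  have [k /setIP[kS kK]] := set0Pn _ SK.
  have xk : x != k by apply: contraTneq xI => ->; exact: clique_notin_indep.
  by have [v vS xv] := connected_in_neighbour connS xS kS xk; exact: meetN xv.
have xA : x \in A by rewrite memA xI orbT.
by have [u uS xu] := dom x xA xS; exact: meetN xu.
Qed.

Lemma hits_cds S : S \subset A -> hits (cds_hypergraph K I) S -> cds_in e A S.
Proof.
move=> SA /hitsP hitS.
have [k0 /setIP[k0S k0K]] := set0Pn _ (hitS K (setU11 _ _)).
have hitN x : x \in I -> exists2 u, u \in S & u \in neighbours_in K x.
  by move=> xI; apply/setI_neq0P/hitS/setU1r/imset_f.
set E := [rel u v | [&& e u v, u \in S & v \in S]].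
have E_sym : connect_sym E.
  apply: sym_connect_sym => u v /=.
  by rewrite e_sym; case: (u \in S); case: (v \in S); rewrite ?andbF.
have to_k0 x : x \in S -> connect E x k0.
  have edge_k0 y : y \in S -> y \in K -> connect E y k0.
    move=> yS yK; have [->//|yk0] := eqVneq y k0.
    by apply: connect1; rewrite /= yS k0S (cliqueK yK k0K yk0).
  move=> xS; have [xK|xK] := boolP (x \in K); first exact: edge_k0.
  have [u uS /setIdP[uK xu]] := hitN x (indep_of_notin_clique SA xS xK).
  by apply: (connect_trans (y := u)); [apply: connect1; rewrite /= xu xS|exact: edge_k0].
split=> // [v vA vS|x y xS yS]; last first.
  by rewrite (connect_trans (to_k0 x xS)) // E_sym to_k0.
have [vK|vK] := boolP (v \in K).
  by exists k0 => //; apply: cliqueK vK k0K _; apply: contraNneq vS => ->.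
have [u uS /setIdP[_ vu]] := hitN v (indep_of_notin_clique (subxx A) vA vK).
by exists u.
Qed.

Lemma crossing_neighbourhoods_F2 x y : x \in I -> y \in I ->
  1 < #|neighbours_in K x :\: neighbours_in K y| ->
  1 < #|neighbours_in K y :\: neighbours_in K x| -> ~ F2_free e.
Proof.
have mem_diff p q u :
    u \in neighbours_in K p :\: neighbours_in K q -> [/\ u \in K, e p u & ~~ e q u].
  by rewrite !inE; case: (u \in K); case: (e p u); case: (e q u).
move=> xI yI /card_gt1P[a [b [/mem_diff[aK xa ya] /mem_diff[bK xb yb] ab]]].
case/card_gt1P=> c [d [/mem_diff[cK yc xc] /mem_diff[dK yd xd] cd]] F2free.
have ac : a != c by apply: contraNneq ya => ->.
have ad : a != d by apply: contraNneq ya => ->.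
have bc : b != c by apply: contraNneq yb => ->.
have bd : b != d by apply: contraNneq yb => ->.
have [eab eac ead] : [/\ e a b, e a c & e a d] by split; apply: cliqueK.
have [ebc ebd ecd] : [/\ e b c, e b d & e c d] by split; apply: cliqueK.
have [eax ebx ecx edx] : [/\ e a x, e b x, ~~ e c x & ~~ e d x].
  by rewrite !(e_sym _ x) xa xb xc xd.
have [eay eby ecy edy] : [/\ ~~ e a y, ~~ e b y, e c y & e d y].
  by rewrite !(e_sym _ y) yc yd ya yb.
have exy : e x y = false := negbTE (indepI xI yI).
pose f (i : 'I_6) := nth x [:: a; b; c; d; x; y] i.
have fE i j : e (f i) (f j) = F2_edge i j.
  wlog ij : i j / i <= j.
    by move=> le; case: (leqP i j) => [/le//|/ltnW/le]; rewrite e_sym F2_edge_sym.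
  by case: i j ij => [[|[|[|[|[|[|?]]]]]] ?] [[|[|[|[|[|[|?]]]]]] ?] //= _;
    rewrite /f /F2_edge /= ?e_irr ?eab ?eac ?ead ?ebc ?ebd ?ecd ?eax ?ebx
      ?(negbTE ecx) ?(negbTE edx) ?(negbTE eay) ?(negbTE eby) ?ecy ?edy ?exy.
by apply: F2free; exists f; split; [exact: F2_pattern_injective|].
Qed.

Lemma cds_hypergraph_one_sperner : F2_free e -> one_sperner (cds_hypergraph K I).
Proof.
move=> F2free N M NH MH.
have small P : P \in cds_hypergraph K I -> #|P :\: K| <= 1.
  by move/cds_hypergraph_sub; rewrite -setD_eq0 => /eqP->; rewrite cards0.
case/setU1P: NH => [->|/imsetP[x xI ->]]; first by right; exact: small.
case/setU1P: MH => [->|/imsetP[y yI ->]]; first by left; apply/small/setU1r/imset_f.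
case: (leqP _ 1) => [|gt1_xy]; first by left.
case: (leqP _ 1) => [|gt1_yx]; first by right.
by case: (crossing_neighbourhoods_F2 xI yI gt1_xy gt1_yx).
Qed.

Lemma connected_domishold_in_split : A != set0 -> F2_free e -> connected_domishold_in e A.
Proof.
move=> A0 F2free; right.
have [w [t [_ wt]]] := one_sperner_threshold (@cds_hypergraph_sub K I)
  (cds_hypergraph_one_sperner F2free).
exists (fun x => INR (w x)), (INR t); split; first by move=> x; exact: pos_INR.
split=> [|S SA]; first exact: pos_INR.
rewrite sum_INR; split=> [/INR_le/leP|].
  by rewrite -wt => /(hits_cds SA).
by move/(cds_hits A0 SA); rewrite wt => /leP/le_INR.
Qed.

End Partition.

Lemma split_graph_in A : split_graph e ->
  exists K I, [/\ K :|: I = A, K :&: I = set0, is_clique e K & is_independent e I].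
Proof.
case=> K [I [KIT KI0 cliqueK indepI]]; exists (K :&: A), (I :&: A); split.
- by rewrite -setIUl KIT setTI.
- by rewrite setIACA KI0 set0I.
- by move=> x y /setIP[xK _] /setIP[yK _]; exact: cliqueK.
- by move=> x y /setIP[xI _] /setIP[yI _]; exact: indepI.
Qed.

(* Only one vertex of the independent set can be adjacent to the whole clique,
   and moving it to the clique keeps the partition split. *)
Lemma undominated_partition A K I :
  K :|: I = A -> K :&: I = set0 -> is_clique e K -> is_independent e I ->
  exists K' I', [/\ K' :|: I' = A, K' :&: I' = set0, is_clique e K', is_independent e I'
    & forall x, x \in I' -> exists2 k, k \in K' & ~~ e x k].
Proof.
move=> KIA KI0 cliqueK indepI.
have [x /andP[xI /forall_inP xK]|none] := pickP [pred x | (x \in I) && [forall k in K, e x k]].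
  exists (x |: K), (I :\ x); split.
  - by rewrite -setUA setUCA setD1K.
  - apply/eqP; rewrite -subset0; apply/subsetP=> v /setIP[/setU1P[->|vK] /setD1P[vx vI]].
      by rewrite eqxx in vx.
    by rewrite -KI0 inE vK vI.
  - move=> u v /setU1P[->|uK] /setU1P[->|vK] uv; first by rewrite eqxx in uv.
    + exact: xK.
    + by rewrite e_sym; apply: xK.
    + exact: cliqueK.
  - by move=> u v /setD1P[_ uI] /setD1P[_ vI]; exact: indepI.
  - by move=> y /setD1P[_ yI]; exists x; [exact: setU11 | exact: indepI].
exists K, I; split=> // y yI; have /negbT := none y; rewrite /= yI /=.
by case/forall_inPn => k kK yk; exists k.
Qed.

End SplitGraphs.

Theorem mainTheorem12 (T : finType) (e : rel T)
  (e_sym : symmetric e) (e_irr : irreflexive e) :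
  split_graph e -> F2_free e -> hereditarily_connected_domishold e.
Proof.
move=> split F2free A.
have [->|A0] := eqVneq A set0; first exact: connected_domishold_in_set0.
have [K0 [I0 [KIA0 KI00 cliqueK0 indepI0]]] := split_graph_in A split.
have [K [I [KIA KI0 cliqueK indepI undominated]]] :=
  undominated_partition e_sym KIA0 KI00 cliqueK0 indepI0.
exact: (connected_domishold_in_split e_sym e_irr KIA KI0 cliqueK indepI undominated A0 F2free).
Qed.
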